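(* Let $D$ be a non-zero square-free integer and $E: y^2=x^3+D$. Let $Q\in E(\mathbb{Q})$ with $2Q$ not the identity and $Q$ not the identity, and set $P=2Q$. Suppose that $B_Q$ is even, that $3\nmid C_Q$, and that $B_P$ is an $l$th power of an integer for some prime $l$. Then $|C_Q|$ and $2B_Q$ are both $l$th powers of integers.
   Context: For a point $R\in E(\mathbb{Q})$ different from the identity write $x(R)=A_R/B_R^2$, $y(R)=C_R/B_R^3$ with $A_R,B_R,C_R\in\mathbb{Z}$, $B_R>0$ and $\gcd(A_RC_R,B_R)=1$. *)

From HB Require Import structures.
From mathcomp Require Import all_boot all_order all_algebra.
Set Implicit Arguments. Unset Strict Implicit. Unset Printing Implicit Defensive.
Import Order.TTheory GRing.Theory Num.Theory.
Local Open Scope ring_scope.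

Definition squarefree_int (D : int) : Prop :=
  forall d : int, (d * d %| D)%Z -> `|d| = 1.

Definition on_curve (D : int) (x y : rat) : Prop :=
  y ^+ 2 = x ^+ 3 + D%:~R.

(* Doubling on y^2 = x^3 + D for an affine point with y <> 0 (tangent slope
   3x^2/(2y)); the result is again an affine point. *)
Definition dbl_slope (x y : rat) : rat := (3 * x ^+ 2) / (2 * y).
Definition dbl_x (x y : rat) : rat := dbl_slope x y ^+ 2 - 2 * x.
Definition dbl_y (x y : rat) : rat := dbl_slope x y * (x - dbl_x x y) - y.

Definition std_rep (x y : rat) (A B C : int) : Prop :=
  [/\ 0 < B, coprimez (A * C) B,
      x = A%:~R / (B%:~R) ^+ 2 & y = C%:~R / (B%:~R) ^+ 3].

Definition is_lth_power (l : nat) (n : int) : Prop :=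
  exists m : int, n = m ^+ l.

From HB Require Import structures.
From mathcomp Require Import all_boot all_order all_algebra ring.
Import Order.TTheory GRing.Theory Num.Theory.
Local Open Scope ring_scope.

(* In weighted coordinates x = A/B^2, y = C/B^3 the doubling formula reads
   x(2Q) = A (9 A^3 - 8 C^2) / (2 B C)^2.  A common factor g of A and C gives
   g^2 | C^2 - A^3 = D B^6, so square-freeness of D forces gcd(A, C) = 1.
   The numerator is then prime to 2 B C: it is A^4 mod B (as C^2 = A^3 mod B),
   9 A^4 mod C with 3 not dividing C, and 2 divides B.  Hence the fraction is
   in lowest terms and B_P = 2 B_Q |C_Q|, a product of two coprime positive
   factors; if it is an l-th power, so is each factor. *)

Lemma coprime_mul_expn_l (u v k l : nat) :
  coprime u v -> (0 < u)%N -> (0 < v)%N -> (u * v = k ^ l)%N ->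
  exists w, u = (w ^ l)%N.
Proof.
move=> cuv u_gt0 v_gt0 uvk; exists (k`_(\pi(u)))%N.
rewrite -partnX -uvk partnM // partn_pi // part_p'nat ?muln1 //.
by rewrite -coprime_pi'.
Qed.

Lemma is_lth_power_coprime_mull {l : nat} {u v m : int} :
  0 < u -> 0 < v -> coprimez u v -> u * v = m ^+ l -> is_lth_power l u.
Proof.
move=> u_gt0 v_gt0 cuv uvm.
have [||||w uw] := @coprime_mul_expn_l `|u| `|v| `|m| l.
- by rewrite -coprimezE.
- by rewrite absz_gt0 gt_eqF.
- by rewrite absz_gt0 gt_eqF.
- by rewrite -abszM uvm abszX.
by exists w%:Z; rewrite -(gtz0_abs u_gt0) uw -[Posz _]natz natrX natz.
Qed.

Lemma weighted_curve_eq (F : fieldType) (a b c d : F) : b != 0 ->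
  (c / b ^+ 3) ^+ 2 = (a / b ^+ 2) ^+ 3 + d -> c ^+ 2 = a ^+ 3 + d * b ^+ 6.
Proof.
move=> b0 e; transitivity ((c / b ^+ 3) ^+ 2 * b ^+ 6); first by field.
by rewrite e; field.
Qed.

Lemma dbl_x_weighted (a b c : rat) : b != 0 -> c != 0 ->
  dbl_x (a / b ^+ 2) (c / b ^+ 3) = a * (9 * a ^+ 3 - 8 * c ^+ 2) / (2 * b * c) ^+ 2.
Proof. by move=> b0 c0; rewrite /dbl_x /dbl_slope; field; apply/andP. Qed.

Lemma std_rep_num_y_neq0 {x y : rat} {A B C : int} :
  std_rep x y A B C -> y != 0 -> C != 0.
Proof. by case=> _ _ _ ->; apply: contraNneq => ->; rewrite mul0r. Qed.

Lemma std_rep_curve_eq {D : int} {x y : rat} {A B C : int} :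
  std_rep x y A B C -> on_curve D x y -> C ^+ 2 = A ^+ 3 + D * B ^+ 6.
Proof.
case=> B_gt0 _ -> -> onc; apply: (@intr_inj rat).
rewrite !(rmorphD, rmorphM, rmorphXn) /=; apply: weighted_curve_eq onc.
by rewrite intr_eq0 gt_eqF.
Qed.

Lemma std_rep_dbl_x {x y : rat} {A B C AP BP CP : int} :
  std_rep x y A B C -> y != 0 -> std_rep (dbl_x x y) (dbl_y x y) AP BP CP ->
  AP * (2 * B * C) ^+ 2 = A * (9 * A ^+ 3 - 8 * C ^+ 2) * BP ^+ 2.
Proof.
move=> repQ y0 [BP_gt0 _ xP _]; have C0 := std_rep_num_y_neq0 repQ y0.
case: repQ xP => B_gt0 _ -> -> xP.
have B0 : B%:~R != 0 :> rat by rewrite intr_eq0 gt_eqF.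
have BP0 : BP%:~R != 0 :> rat by rewrite intr_eq0 gt_eqF.
rewrite -(intr_eq0 rat) in C0.
move: xP; rewrite dbl_x_weighted // => /eqP.
rewrite eqr_div ?expf_neq0 ?mulf_neq0 // => /eqP cross.
apply: (@intr_inj rat); transitivity (AP%:~R * (2 * B%:~R * C%:~R) ^+ 2 : rat).
  by ring.
by rewrite -cross; ring.
Qed.

Lemma squarefree_coprimez_curve {D A B C : int} : squarefree_int D ->
  coprimez C B -> C ^+ 2 = A ^+ 3 + D * B ^+ 6 -> coprimez A C.
Proof.
move=> sqD cCB curve.
have gA := dvdz_gcdl A C; have gC := dvdz_gcdr A C; set g := gcdz A C in gA gC *.
have gg_DB : (g * g %| D * B ^+ 6)%Z.
  have -> : D * B ^+ 6 = C ^+ 2 - A ^+ 3 by rewrite curve; ring.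
  apply: rpredB; first by rewrite expr2; apply: dvdz_mul.
  by rewrite exprS; apply: dvdz_mull; rewrite expr2; apply: dvdz_mul.
have cgB : coprimez (g * g) (B ^+ 6).
  by apply: coprimezXr; rewrite coprimezMl andbb (coprimez_dvdl gC).
move/(_ g): sqD; rewrite -(Gauss_dvdzl _ cgB) => /(_ gg_DB).
by rewrite ger0_norm // => -[g1]; rewrite /coprimez /gcdz g1.
Qed.

Lemma coprimez_dbl_num {D A B C : int} :
  C ^+ 2 = A ^+ 3 + D * B ^+ 6 -> coprimez A B -> coprimez A C ->
  ~~ (3 %| C)%Z -> (2 %| B)%Z ->
  coprimez (A * (9 * A ^+ 3 - 8 * C ^+ 2)) (2 * B * C).
Proof.
move=> curve cAB cAC n3C B2.
have cNB : coprimez (9 * A ^+ 3 - 8 * C ^+ 2) B.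
  have -> : 9 * A ^+ 3 - 8 * C ^+ 2 = (- 8 * D * B ^+ 5) * B + A ^+ 3.
    by rewrite curve; ring.
  by rewrite coprimez_sym /coprimez gcdzMDl -/(coprimez _ _) coprimez_sym coprimezXl.
have cNC : coprimez (9 * A ^+ 3 - 8 * C ^+ 2) C.
  have -> : 9 * A ^+ 3 - 8 * C ^+ 2 = (- 8 * C) * C + 3 ^+ 2 * A ^+ 3 by ring.
  rewrite coprimez_sym /coprimez gcdzMDl -/(coprimez _ _) coprimezMr.
  by rewrite !coprimezXr ?(coprimez_sym C) // coprimezE prime_coprime.
have cNB' : coprimez (A * (9 * A ^+ 3 - 8 * C ^+ 2)) B by rewrite coprimezMl cAB.
by rewrite !coprimezMr cNB' (coprimez_dvdr B2 cNB') coprimezMl cAC.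
Qed.

Lemma coprimez_sqr_den_eq {a b c d : int} : coprimez a b -> coprimez c d ->
  a * d ^+ 2 = c * b ^+ 2 -> `|b|%N = `|d|%N.
Proof.
move=> cab ccd e.
have d_b : (d ^+ 2 %| b ^+ 2)%Z.
  have cdc : coprimez (d ^+ 2) c by rewrite coprimezXl // coprimez_sym.
  by rewrite -(Gauss_dvdzr _ cdc) -e dvdz_mull.
have b_d : (b ^+ 2 %| d ^+ 2)%Z.
  have cba : coprimez (b ^+ 2) a by rewrite coprimezXl // coprimez_sym.
  by rewrite -(Gauss_dvdzr _ cba) e dvdz_mull.
move: d_b b_d; rewrite !dvdzE !abszX !dvdn_pexp2r // => d_b b_d.
by apply/eqP; rewrite eqn_dvd b_d d_b.
Qed.

Lemma std_rep_dbl_den {D : int} {x y : rat} {A B C AP BP CP : int} :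
  squarefree_int D -> on_curve D x y -> y != 0 ->
  std_rep x y A B C -> std_rep (dbl_x x y) (dbl_y x y) AP BP CP ->
  ~~ (3 %| C)%Z -> (2 %| B)%Z -> BP = 2 * B * `|C|.
Proof.
move=> sqD onc y0 repQ repP n3C B2.
have curve := std_rep_curve_eq repQ onc.
have [B_gt0 cACB _ _] := repQ; have [BP_gt0 cAPCPBP _ _] := repP.
move: cACB cAPCPBP; rewrite !coprimezMl => /andP[cAB cCB] /andP[cAPBP _].
have cAC := squarefree_coprimez_curve sqD cCB curve.
have cNM := coprimez_dbl_num curve cAB cAC n3C B2.
have := coprimez_sqr_den_eq cAPBP cNM (std_rep_dbl_x repQ y0 repP).
rewrite !abszM => BPE.
by rewrite -(gtz0_abs BP_gt0) BPE !PoszM (gtz0_abs B_gt0) abszE.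
Qed.

Theorem mainTheorem9 (D : int) (xQ yQ : rat)
    (AQ BQ CQ AP BP CP : int) (l : nat) :
  D != 0 -> squarefree_int D ->
  on_curve D xQ yQ ->
  yQ != 0 ->
  std_rep xQ yQ AQ BQ CQ ->
  std_rep (dbl_x xQ yQ) (dbl_y xQ yQ) AP BP CP ->
  (2 %| BQ)%Z -> ~~ (3 %| CQ)%Z ->
  prime l -> is_lth_power l BP ->
  is_lth_power l `|CQ| /\ is_lth_power l (2 * BQ).
Proof.
move=> _ sqD onc y0 repQ repP B2 n3C _ [m BPm].
have BPE := std_rep_dbl_den sqD onc y0 repQ repP n3C B2.
have [BQ_gt0 cACB _ _] := repQ.
have twoBQ_gt0 : 0 < 2 * BQ by rewrite mulr_gt0.
have absCQ_gt0 : 0 < `|CQ| by rewrite normr_gt0 (std_rep_num_y_neq0 repQ y0).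
have cop : coprimez (2 * BQ) `|CQ|.
  move: cACB; rewrite coprimezMl => /andP[_ cCB].
  rewrite -abszE coprimezE absz_nat -coprimezE coprimez_sym.
  by rewrite coprimezMr cCB (coprimez_dvdr B2 cCB).
split.
- apply: (is_lth_power_coprime_mull absCQ_gt0 twoBQ_gt0).
  + by rewrite coprimez_sym.
  + rewrite mulrC -BPE; exact: BPm.
- apply: (is_lth_power_coprime_mull twoBQ_gt0 absCQ_gt0 cop).
  rewrite -BPE; exact: BPm.
Qed.
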